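(* For every integer $k\ge2$ and every $x\in\mathbb{R}^n$, $$\sqrt[2k-2]{H_{2k-2}(x)}\le\sqrt[2k]{H_{2k}(x)}.$$
   Context: For $m\in\mathbb{N}$, $H_m(x)=h_m(x)/\binom{n+m-1}{m}$ where $h_m(x)=\sum_{\alpha\in\mathbb{N}_0^n,|\alpha|=m}x^\alpha$ is the complete homogeneous symmetric polynomial of degree $m$ in $n$ variables (for even $m$ it is nonnegative on $\mathbb{R}^n$). *)

From HB Require Import structures.
From mathcomp Require Import all_boot all_order all_algebra.
From mathcomp Require Import all_classical all_reals all_analysis.
Set Implicit Arguments. Unset Strict Implicit. Unset Printing Implicit Defensive.
Import Order.TTheory GRing.Theory Num.Theory.
Local Open Scope ring_scope.

(* complete homogeneous symmetric polynomial h_m evaluated at x in R^n: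
   sum over multi-indices alpha : 'I_n -> nat with |alpha| = m of x^alpha.
   Each alpha_i <= m, so alpha ranges over {ffun 'I_n -> 'I_m.+1}. *)
Definition hsym (R : realType) (n m : nat) (x : 'rV[R]_n) : R :=
  \sum_(a : {ffun 'I_n -> 'I_m.+1} | (\sum_(i < n) (a i : nat))%N == m)
     \prod_(i < n) x ord0 i ^+ (a i : nat).

Definition Hsym (R : realType) (n m : nat) (x : 'rV[R]_n) : R :=
  hsym m x / ('C(n + m - 1, m))%:R.

(* Let c_i(s) count the letters i in a word s over 'I_n.  Grouping the words of
   length m by their letter counts gives
     sum_(|s| = m) x^s prod_i c_i(s)! = m! h_m(x) = n (n+1) ... (n+m-1) H_m(x).
   By Vandermonde, (a+b)! = sum_k a! C(a,k) b! C(b,k), so the kernel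
   (u, v) |-> prod_i c_i(uv)! on words of length D is a sum of rank-one kernels
   and its bilinear form is positive semidefinite.  Cauchy-Schwarz for this form,
   applied to u |-> x^u and to u |-> x^(u without its first two letters) on words
   of length i + 2, gives H_(2i+2)^2 <= H_(2i) H_(2i+4): summing the kernel over
   the ignored letters only contributes a constant factor.  So j |-> H_(2j)(x) is
   a nonnegative log-convex sequence starting at H_0 = 1, and such a sequence has
   nondecreasing j-th roots. *)

From HB Require Import structures.
From mathcomp Require Import all_boot all_order all_algebra.
From mathcomp Require Import all_classical all_reals all_analysis.
From mathcomp Require Import zify ring.
Set Implicit Arguments. Unset Strict Implicit. Unset Printing Implicit Defensive.
Import Order.TTheory GRing.Theory Num.Theory.
Local Open Scope ring_scope.

Section WordSum.
Variables (n : nat) (V : nmodType).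
Local Notation word := (seq 'I_n).

Fixpoint wsum (m : nat) (F : word -> V) : V :=
  if m is m'.+1 then \sum_(i < n) wsum m' (fun s => F (i :: s)) else F [::].

Lemma eq_wsum m F G : (forall s, size s = m -> F s = G s) -> wsum m F = wsum m G.
Proof.
elim: m F G => [|m IH] F G eqFG /=; first exact: eqFG.
by apply: eq_bigr => i _; apply: IH => s sz_s; apply: eqFG; rewrite /= sz_s.
Qed.

Lemma wsum_sum m (I : finType) (F : I -> word -> V) :
  wsum m (fun s => \sum_k F k s) = \sum_k wsum m (F k).
Proof.
elim: m F => [|m IH] F //=; rewrite exchange_big /=.
by apply: eq_bigr => i _; exact: (IH (fun k s => F k (i :: s))).
Qed.

Lemma wsum_cat a b F :
  wsum (a + b) F = wsum a (fun s => wsum b (fun t => F (s ++ t))).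
Proof.
by elim: a F => [|a IH] F //=; apply: eq_bigr => i _; exact: IH.
Qed.

Lemma exchange_wsum a b (F : word -> word -> V) :
  wsum a (fun s => wsum b (F s)) = wsum b (fun t => wsum a (F^~ t)).
Proof.
elim: a F => [|a IH] F //=; rewrite wsum_sum.
by apply: eq_bigr => i _; exact: (IH (fun s => F (i :: s))).
Qed.

End WordSum.

Lemma mulr_wsumr (R : pzSemiRingType) n m c (F : seq 'I_n -> R) :
  c * wsum m F = wsum m (fun s => c * F s).
Proof.
by elim: m F => [|m IH] F //=; rewrite mulr_sumr; apply: eq_bigr => i _; exact: IH.
Qed.

Lemma natr_wsum (R : pzSemiRingType) n m (F : seq 'I_n -> nat) :
  (wsum m F)%:R = wsum m (fun s => (F s)%:R) :> R.
Proof.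
by elim: m F => [|m IH] F //=; rewrite natr_sum; apply: eq_bigr => i _; exact: IH.
Qed.

Section CountFact.
Variable n : nat.
Local Notation word := (seq 'I_n).

Definition count_fact (s : word) : nat := \prod_(i < n) (count_mem i s)`!.

Lemma perm_count_fact s t : perm_eq s t -> count_fact s = count_fact t.
Proof. by move/permP=> eq_st; apply: eq_bigr => i _; rewrite eq_st. Qed.

Lemma count_fact_cons i s :
  count_fact (i :: s) = ((count_mem i s).+1 * count_fact s)%N.
Proof.
rewrite /count_fact (bigD1 i) //= [in RHS](bigD1 i) //= eqxx add1n factS mulnA.
by congr (_ * _)%N; apply: eq_bigr => j /negbTE; rewrite eq_sym => ->.
Qed.

Lemma sum_count_mem s : (\sum_(i < n) count_mem i s)%N = size s.
Proof.
elim: s => [|a s IH] /=; first by rewrite big1.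
rewrite big_split /= IH (bigD1 a) //= eqxx big1 ?add1n // => j.
by move/negbTE; rewrite eq_sym => ->.
Qed.

Fixpoint rfact (c m : nat) : nat := if m is m'.+1 then (c * rfact c.+1 m')%N else 1%N.

Lemma rfactE c m : rfact c m = (c + m).-1 ^_ m.
Proof.
elim: m c => [|m IH] c //=.
by rewrite IH addSnnS addnS /= ffactnSr addnK mulnC.
Qed.

Lemma rfactD c a b : rfact c (a + b) = (rfact c a * rfact (c + a) b)%N.
Proof.
by elim: a c => [|a IH] c /=; rewrite ?mul1n ?addn0 // IH mulnA addSnnS.
Qed.

Lemma rfact_gt0 c m : (0 < c)%N -> (0 < rfact c m)%N.
Proof. by elim: m c => //= m IH c c_gt0; rewrite muln_gt0 c_gt0 IH. Qed.

Lemma wsum_count_fact_cat b s :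
  wsum b (fun r => count_fact (r ++ s)) = (rfact (size s + n) b * count_fact s)%N.
Proof.
elim: b s => [|b IH] s /=; first by rewrite mul1n.
transitivity
  (\sum_(i < n) (count_mem i s).+1 * (rfact (size s + n).+1 b * count_fact s))%N.
  apply: eq_bigr => i _.
  rewrite (eq_wsum (G := fun r => count_fact (r ++ i :: s))); last first.
    by move=> r _; apply: perm_count_fact; rewrite -cat1s perm_catCA.
  by rewrite IH count_fact_cons mulnCA.
rewrite -big_distrl /= -mulnA; congr (_ * _)%N.
under eq_bigr do rewrite -addn1.
by rewrite big_split /= sum_count_mem sum1_card card_ord.
Qed.

Definition count_vec (s : word) : {ffun 'I_n -> nat} := [ffun i => count_mem i s].

Lemma eq_count_vec_cons i s (al : {ffun 'I_n -> nat}) :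
  (count_vec (i :: s) == al) =
  (0 < al i)%N && (count_vec s == [ffun j => al j - (i == j)]%N).
Proof.
apply/eqP/andP => [<-|[al_i_gt0 /eqP cnt_s]].
  split; first by rewrite ffunE /= eqxx.
  by apply/eqP/ffunP => j; rewrite !ffunE /= addKn.
apply/ffunP => j; move/ffunP/(_ j): cnt_s; rewrite !ffunE /= => ->.
by case: eqP => [<-|_]; rewrite ?subn0 // add1n subn1 prednK.
Qed.

Lemma wsum_count_vec (R : pzSemiRingType) m (al : {ffun 'I_n -> nat}) :
  wsum m (fun s => ((count_vec s == al) * count_fact s)%:R) =
  (m`! * ((\sum_i al i)%N == m))%:R :> R.
Proof.
elim: m al => [|m IH] al /=.
  rewrite [count_fact _]big1 // muln1 mul1n; congr (_%:R); congr (nat_of_bool _).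
  apply/idP/idP => [/eqP<-|].
    by rewrite big1 // => i _; rewrite ffunE.
  rewrite sum_nat_eq0 => /forallP al0.
  by apply/eqP/ffunP => i; rewrite ffunE; apply/esym/eqP/al0.
transitivity (\sum_(i < n) (al i * (m`! * ((\sum_j al j)%N == m.+1)))%:R : R).
  apply: eq_bigr => i _; pose al' := [ffun j => al j - (i == j)]%N.
  rewrite (eq_wsum (G := fun s => (al i)%:R * ((count_vec s == al') * count_fact s)%:R)).
    rewrite -mulr_wsumr IH -natrM; congr (_%:R).
    have [->|al_i_gt0] := posnP (al i); first by rewrite !mul0n.
    suff -> : (\sum_j al j = (\sum_j al' j).+1)%N by rewrite eqSS.
    rewrite (bigD1 i) // [in RHS](bigD1 i) //= ffunE eqxx subn1 -addSn prednK //.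
    by apply/congr1/eq_bigr => j /negbTE; rewrite ffunE eq_sym => ->; rewrite subn0.
  move=> s _; rewrite eq_count_vec_cons count_fact_cons -natrM; congr (_%:R).
  have [->|al_i_gt0] := posnP (al i); first by [].
  case: eqP => [cnt_s|]; rewrite ?muln0 // !mul1n; congr (_ * _)%N.
  by move/ffunP/(_ i): cnt_s; rewrite !ffunE eqxx => ->; rewrite subn1 prednK.
rewrite -natr_sum -big_distrl /= factS mulnA.
by case: eqP => [->|]; rewrite ?muln0.
Qed.

End CountFact.

Lemma fact_addn_Vandermonde a b K : (b < K)%N ->
  (a + b)`! = (\sum_(k < K) (a`! * 'C(a, k)) * (b`! * 'C(b, k)))%N.
Proof.
move=> b_lt_K; have /esym := bin_fact (leq_addl a b); rewrite addnK => ->.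
rewrite -binomial.Vandermonde.
rewrite (big_ord_widen K (fun k => 'C(a, k) * 'C(b, b - k))%N b_lt_K).
rewrite big_distrl big_mkcond /=; apply: eq_bigr => k _.
case: ltnP => [k_le_b|b_lt_k]; last by rewrite (bin_small b_lt_k) !muln0.
by rewrite (bin_sub (k_le_b : k <= b)%N); ring.
Qed.

Section CountFactForm.
Variables (R : comPzSemiRingType) (n : nat).
Local Notation word := (seq 'I_n).
Implicit Types (x : 'I_n -> R) (F G : word -> R).

Definition wprod x (s : word) : R := \prod_(j <- s) x j.

Lemma wprod_cat x s t : wprod x (s ++ t) = wprod x s * wprod x t.
Proof. exact: big_cat. Qed.

Lemma wprod_count x s : wprod x s = \prod_(i < n) x i ^+ count_mem i s.
Proof.
elim: s => [|a s IH]; first by rewrite /wprod big_nil big1.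
rewrite /wprod big_cons -/(wprod x s) IH.
under [RHS]eq_bigr do rewrite /= exprD.
rewrite big_split /= [in RHS](bigD1 a) //= eqxx expr1; congr (_ * _).
rewrite big1 ?mulr1 // => j.
by rewrite eq_sym => /negbTE->.
Qed.

Definition fact_hsym x m := wsum m (fun s => wprod x s * (count_fact s)%:R).

Definition cform D F G :=
  wsum D (fun u => wsum D (fun v => F u * G v * (count_fact (u ++ v))%:R)).

Definition vdm_weight D (k : {ffun 'I_n -> 'I_D.+1}) (u : word) : nat :=
  \prod_(i < n) ((count_mem i u)`! * 'C(count_mem i u, k i)).

Lemma count_fact_cat D u v : (size v <= D)%N ->
  count_fact (u ++ v) =
  (\sum_(k : {ffun 'I_n -> 'I_D.+1}) vdm_weight k u * vdm_weight k v)%N.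
Proof.
move=> sz_v; rewrite /count_fact.
under eq_bigr => i _ do rewrite count_cat (@fact_addn_Vandermonde _ _ D.+1)
  ?ltnS ?(leq_trans (count_size _ _) sz_v) //.
by rewrite bigA_distr_bigA /=; apply: eq_bigr => k _; rewrite -big_split.
Qed.

Definition cform_coord D (k : {ffun 'I_n -> 'I_D.+1}) F :=
  wsum D (fun u => F u * (vdm_weight k u)%:R).

Lemma cform_sos D F G :
  cform D F G = \sum_(k : {ffun 'I_n -> 'I_D.+1}) cform_coord k F * cform_coord k G.
Proof.
rewrite /cform.
transitivity (wsum D (fun u => \sum_(k : {ffun 'I_n -> 'I_D.+1})
  F u * (vdm_weight k u)%:R * cform_coord k G)).
  apply: eq_wsum => u _; rewrite /cform_coord.
  transitivity (wsum D (fun v => \sum_(k : {ffun 'I_n -> 'I_D.+1})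
    (F u * (vdm_weight k u)%:R) * (G v * (vdm_weight k v)%:R))).
    apply: eq_wsum => v sz_v; rewrite (@count_fact_cat D u v) ?sz_v //.
    by rewrite natr_sum mulr_sumr; apply: eq_bigr => k _; rewrite natrM mulrACA.
  by rewrite wsum_sum; apply: eq_bigr => k _; rewrite mulr_wsumr.
rewrite wsum_sum; apply: eq_bigr => k _.
by rewrite [RHS]mulrC mulr_wsumr; apply: eq_wsum => u _; rewrite mulrC.
Qed.

Lemma wsum_fact_hsym_prefix x a m :
  wsum a (fun p => wsum m (fun w => wprod x w * (count_fact (p ++ w))%:R)) =
  (rfact (m + n) a)%:R * fact_hsym x m.
Proof.
rewrite exchange_wsum /fact_hsym mulr_wsumr; apply: eq_wsum => w sz_w.
by rewrite -mulr_wsumr -natr_wsum wsum_count_fact_cat sz_w natrM mulrCA.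
Qed.

Lemma cform_wprod x D : cform D (wprod x) (wprod x) = fact_hsym x (D + D).
Proof.
by rewrite /fact_hsym wsum_cat; do 2!apply: eq_wsum => ? _; rewrite wprod_cat.
Qed.

Lemma cform_drop_wprod x a i :
  cform (a + i) (wprod x \o drop a) (wprod x) =
  (rfact (i + (a + i) + n) a)%:R * fact_hsym x (i + (a + i)).
Proof.
rewrite -wsum_fact_hsym_prefix /cform wsum_cat; apply: eq_wsum => p sz_p.
rewrite [RHS]wsum_cat; do 2!apply: eq_wsum => ? _.
by rewrite /= drop_size_cat // wprod_cat catA.
Qed.

Lemma cform_drop x a i :
  cform (a + i) (wprod x \o drop a) (wprod x \o drop a) =
  (rfact (i + i + n) (a + a))%:R * fact_hsym x (i + i).
Proof.
transitivity (wsum a (fun p => wsum i (fun u => wsum a (fun q => wsum i (fun v =>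
  wprod x u * wprod x v * (count_fact ((p ++ q) ++ (u ++ v)))%:R))))).
  rewrite /cform wsum_cat; apply: eq_wsum => p sz_p; apply: eq_wsum => u _.
  rewrite wsum_cat; apply: eq_wsum => q sz_q; apply: eq_wsum => v _.
  rewrite /= !drop_size_cat //; congr (_ * _%:R); apply: perm_count_fact.
  by rewrite -!catA perm_cat2l perm_catCA.
rewrite -wsum_fact_hsym_prefix wsum_cat; apply: eq_wsum => p _.
rewrite exchange_wsum; apply: eq_wsum => q _.
by rewrite wsum_cat; do 2!apply: eq_wsum => ? _; rewrite wprod_cat catA.
Qed.

End CountFactForm.

Lemma sum_mul_sqr_le (R : realDomainType) (I : finType) (f g : I -> R) :
  (\sum_i f i * g i) ^+ 2 <= (\sum_i f i ^+ 2) * (\sum_i g i ^+ 2).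
Proof.
pose h i j := f i ^+ 2 * g j ^+ 2.
have lagrange : \sum_i \sum_j (f i * g j - f j * g i) ^+ 2 =
    ((\sum_i f i ^+ 2) * (\sum_i g i ^+ 2) - (\sum_i f i * g i) ^+ 2) *+ 2.
  have pt i j : (f i * g j - f j * g i) ^+ 2 =
      h i j + h j i - (f i * g i) * (f j * g j) *+ 2 by rewrite /h; ring.
  under eq_bigr do under eq_bigr do rewrite pt.
  under eq_bigr do rewrite sumrB big_split /= sumrMnl.
  rewrite sumrB big_split /= [X in _ + X - _]exchange_big /= sumrMnl.
  by rewrite expr2 !big_distrlr /= mulrnBl mulr2n.
rewrite -subr_ge0 -(pmulrn_lge0 _ (ltn0Sn 1)) -lagrange.
by do 2!(apply: sumr_ge0 => ? _); exact: sqr_ge0.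
Qed.

Section CountFactFormPsd.
Variables (R : realDomainType) (n D : nat).
Implicit Types F G : seq 'I_n -> R.

Lemma cform_ge0 F : 0 <= cform D F F.
Proof. by rewrite cform_sos; apply: sumr_ge0 => k _; rewrite -expr2 sqr_ge0. Qed.

Lemma cform_CauchySchwarz F G : cform D F G ^+ 2 <= cform D F F * cform D G G.
Proof.
rewrite !cform_sos.
under [X in _ <= X * _]eq_bigr do rewrite -expr2.
under [X in _ <= _ * X]eq_bigr do rewrite -expr2.
exact: sum_mul_sqr_le.
Qed.

End CountFactFormPsd.

Section NormalizedHsym.
Variables (R : realType) (n : nat) (xr : 'rV[R]_n).
Local Notation x := (xr ord0).

Lemma fact_hsymE m : fact_hsym x m = m`!%:R * hsym m xr.
Proof.
rewrite /fact_hsym (eq_wsum (G := fun s => \sum_(a : {ffun 'I_n -> 'I_m.+1})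
    (\prod_i x i ^+ a i) * ((count_vec s == [ffun i => a i : nat]) * count_fact s)%:R)).
  rewrite wsum_sum /hsym mulr_sumr [RHS]big_mkcond /=; apply: eq_bigr => a _.
  rewrite -mulr_wsumr wsum_count_vec.
  under [X in (_ * (X == _))%N]eq_bigr do rewrite ffunE.
  by case: (_ == m)%N; rewrite ?muln0 ?mulr0 // muln1 mulrC.
move=> s sz_s.
have cnt_lt i : (count_mem i s < m.+1)%N by rewrite ltnS -sz_s count_size.
pose a0 : {ffun 'I_n -> 'I_m.+1} := [ffun i => Ordinal (cnt_lt i)].
rewrite (bigD1 a0) //= [X in _ + X]big1 ?addr0 => [|a ne_a_a0]; last first.
  have [/ffunP cnt_a|_] := eqVneq (count_vec s) [ffun i => a i : nat]; last first.
    by rewrite mul0n mulr0.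
  case/eqP: ne_a_a0; apply/ffunP => i; apply: val_inj.
  by have := cnt_a i; rewrite !ffunE.
have -> : count_vec s == [ffun i => a0 i : nat] by apply/eqP/ffunP => i; rewrite !ffunE.
by rewrite mul1n wprod_count; congr (_ * _); apply: eq_bigr => i _; rewrite ffunE.
Qed.

Hypothesis n_gt0 : (0 < n)%N.

Lemma fact_hsym_Hsym m : fact_hsym x m = (rfact n m)%:R * Hsym m xr.
Proof.
have C_neq0 : ('C(n + m - 1, m)%:R : R) != 0 by rewrite pnatr_eq0 -lt0n bin_gt0; lia.
by rewrite fact_hsymE /Hsym rfactE -subn1 -bin_ffact natrM; field.
Qed.

Lemma Hsym0 : Hsym 0 xr = 1.
Proof.
have := fact_hsym_Hsym 0; rewrite /fact_hsym /= /wprod big_nil [count_fact _]big1 //.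
by rewrite !mul1r => <-.
Qed.

Lemma Hsym_even_ge0 m : 0 <= Hsym (m + m) xr.
Proof.
have := cform_ge0 m (wprod x); rewrite cform_wprod fact_hsym_Hsym.
by rewrite pmulr_rge0 // ltr0n rfact_gt0.
Qed.

Lemma Hsym_log_convex i :
  Hsym (i + i.+2) xr ^+ 2 <= Hsym (i + i) xr * Hsym (i.+2 + i.+2) xr.
Proof.
pose K := rfact n (i.+2 + i.+2).
have K_gt0 : 0 < K%:R :> R by rewrite ltr0n rfact_gt0.
have rescale m a : (m + a = i.+2 + i.+2)%N ->
    (rfact (m + n) a)%:R * fact_hsym x m = K%:R * Hsym m xr.
  by rewrite /K => <-; rewrite fact_hsym_Hsym mulrA -natrM mulnC addnC -rfactD.
have := cform_CauchySchwarz (2 + i) (wprod x \o drop 2) (wprod x).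
rewrite cform_drop_wprod cform_drop cform_wprod !rescale; try lia.
rewrite (fact_hsym_Hsym (i.+2 + i.+2)).
rewrite -/K [X in _ <= X]mulrACA -[K%:R * K%:R]expr2 exprMn.
by rewrite ler_pM2l // exprn_gt0.
Qed.

End NormalizedHsym.

Lemma log_convex_ler_expr (R : realDomainType) (a : nat -> R) :
  a 0%N = 1 -> (forall j, 0 <= a j) -> (forall j, a j.+1 ^+ 2 <= a j * a j.+2) ->
  forall k, a k ^+ k.+1 <= a k.+1 ^+ k.
Proof.
move=> a0 a_ge0 a_lc; elim=> [|k IH]; first by rewrite expr1 expr0 a0.
have [->|a_neq0] := eqVneq (a k.+1) 0; first by rewrite expr0n /= exprn_ge0.
have a_gt0 : 0 < a k.+1 by rewrite lt0r a_neq0 a_ge0.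
rewrite -(ler_pM2l (exprn_gt0 k a_gt0)) -exprD (_ : k + k.+2 = 2 * k.+1)%N; last lia.
apply: (@le_trans _ _ ((a k * a k.+2) ^+ k.+1)).
  by rewrite exprM lerXn2r ?nnegrE ?exprn_ge0 ?mulr_ge0.
by rewrite exprMn ler_wpM2r ?exprn_ge0.
Qed.

Lemma powR_invn_le (R : realType) (a b : R) p q : 0 <= a -> 0 <= b ->
  (0 < p)%N -> (0 < q)%N -> a ^+ q <= b ^+ p ->
  powR a (p%:R)^-1 <= powR b (q%:R)^-1.
Proof.
move=> a_ge0 b_ge0 p_gt0 q_gt0 ab.
have root_expr (c : R) r s : 0 <= c -> (0 < r)%N ->
    powR c (s%:R)^-1 = powR (c ^+ r) ((s * r)%N%:R)^-1.
  move=> c_ge0 r_gt0; rewrite -powR_mulrn // -powRrM natrM invfM mulrCA mulfV ?mulr1 //.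
  by rewrite pnatr_eq0 -lt0n.
rewrite (root_expr a q) // (root_expr b p) // mulnC.
by apply: ge0_ler_powR; rewrite ?invr_ge0 ?ler0n ?nnegrE ?exprn_ge0.
Qed.

Theorem mainTheorem10 (R : realType) (n k : nat) (x : 'rV[R]_n) :
  (2 <= k)%N ->
  powR (Hsym (2 * k - 2) x) (((2 * k - 2)%N)%:R)^-1
    <= powR (Hsym (2 * k) x) (((2 * k)%N)%:R)^-1.
Proof.
case: k => [|[|m]] // _.
have -> : (2 * m.+2 - 2 = m.+1 + m.+1)%N by lia.
have -> : (2 * m.+2 = m.+2 + m.+2)%N by lia.
have [n0|n_gt0] := posnP n.
  (* The normalizing binomial coefficients vanish, and x / 0 = 0. *)
  rewrite /Hsym !bin_small; try lia.
  by rewrite !invr0 !mulr0 !powR0 // invr_eq0 pnatr_eq0.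
have log_convex j : Hsym (j.+1 + j.+1) x ^+ 2 <= Hsym (j + j) x * Hsym (j.+2 + j.+2) x.
  by rewrite addSnnS; exact: Hsym_log_convex.
have root_le :=
  log_convex_ler_expr (Hsym0 x n_gt0) (Hsym_even_ge0 x n_gt0) log_convex m.+1.
apply: powR_invn_le; rewrite ?Hsym_even_ge0 // !exprD.
by apply: (ler_pM _ _ root_le root_le); rewrite exprn_ge0 ?Hsym_even_ge0.
Qed.
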